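(* Let $n\ge k\ge1$ be integers, $i\in\{1,\ldots,n\}$, and let $H\sim\text{Hyp}(n,i,k)$ and $X\sim\text{Bin}(k, \frac{i}{n})$. Let $H^{\ast}$ denote the random variable $H$ conditioned on the event $\{H\ge ik/n\}$, and $X^{\ast}$ the random variable $X$ conditioned on the event $\{X\ge ik/n\}$. Then $H^{\ast}\le_{st} X^{\ast}$. In particular, \[ \mathbb{E}(H\mid H\ge \mathbb{E}(H)) \le \mathbb{E}(X\mid X\ge \mathbb{E}(X) ). \]
   Context: $\text{Hyp}(n,i,k)$ denotes the hypergeometric distribution: the number of black marbles in a sample without replacement of size $k$ from an urn with $i$ black and $n-i$ white marbles, i.e. $\mathbb{P}(H=j)=\binom{i}{j}\binom{n-i}{k-j}/\binom{n}{k}$, with mean $ik/n$. $\text{Bin}(k,p)$ is the binomial distribution. For random variables $U,V$, $U\le_{st}V$ (usual stochastic order) means $\mathbb{P}(U\ge t)\le\mathbb{P}(V\ge t)$ for all $t\in\mathbb{R}$. *)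

From HB Require Import structures.
From mathcomp Require Import all_boot all_order all_algebra.
Set Implicit Arguments. Unset Strict Implicit. Unset Printing Implicit Defensive.
Import Order.TTheory GRing.Theory Num.Theory.
Local Open Scope ring_scope.

Definition hyp_pmf (R : realFieldType) (n i k j : nat) : R :=
  ('C(i, j) * 'C(n - i, k - j))%:R / ('C(n, k))%:R.

Definition bin_pmf (R : realFieldType) (k : nat) (p : R) (j : nat) : R :=
  ('C(k, j))%:R * p ^+ j * (1 - p) ^+ (k - j).

Definition tail (R : realFieldType) (k : nat) (f : nat -> R) (t : R) : R :=
  \sum_(j < k.+1 | t <= j%:R) f j.

Definition cond_tail (R : realFieldType) (k : nat) (f : nat -> R) (m t : R) : R :=
  (\sum_(j < k.+1 | (t <= j%:R) && (m <= j%:R)) f j) / tail k f m.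

Definition cond_exp (R : realFieldType) (k : nat) (f : nat -> R) (m : R) : R :=
  (\sum_(j < k.+1 | m <= j%:R) j%:R * f j) / tail k f m.

Definition cond_st_le (R : realFieldType) (k : nat) (f g : nat -> R) (m : R) : Prop :=
  forall t : R, cond_tail k f m t <= cond_tail k g m t.

From HB Require Import structures.
From mathcomp Require Import all_boot all_order all_algebra.
From mathcomp Require Import zify ring.
Import Order.TTheory GRing.Theory Num.Theory.
Local Open Scope ring_scope.

(* The likelihood ratio Hyp(n,i,k)(j) / Bin(k,i/n)(j) is nonincreasing on
   [j >= ik/n]: the ratio of consecutive ratios is
   (i - j)(n - i) / ((n - i - (k - j - 1)) i), which is at most 1 exactly when
   i (k - 1) <= j n.  On that region the conditioned binomial therefore
   dominates the conditioned hypergeometric in the likelihood ratio order, and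
   the likelihood ratio order implies that every nondecreasing weight (an
   indicator [t <= j] or the identity) has a larger conditional mean. *)

Definition hyp_weight (n i k j : nat) : nat := 'C(i, j) * 'C(n - i, k - j).

Definition bin_weight (n i k j : nat) : nat := 'C(k, j) * i ^ j * (n - i) ^ (k - j).

Lemma hyp_bin_weight_step (n i k j : nat) :
  (i <= n)%N -> (j < k)%N -> (i * k <= j * n)%N ->
  (hyp_weight n i k j.+1 * bin_weight n i k j <=
   hyp_weight n i k j * bin_weight n i k j.+1)%N.
Proof.
move=> le_in lt_jk le_ik_jn; rewrite /hyp_weight /bin_weight.
set x := (k - j.+1)%N; have kjE : (k - j = x.+1)%N by rewrite /x; lia.
rewrite kjE.
have [lt_ni_x | le_x_ni] := ltnP (n - i) x.
  by rewrite (bin_small lt_ni_x) !(muln0, mul0n).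
have Ci := mul_bin_left i j; have Cn := mul_bin_left (n - i) x.
have Ck := mul_bin_left k j; rewrite kjE in Ck.
set c := ('C(i, j) * 'C(n - i, x) * 'C(k, j) * x.+1 * i ^ j * (n - i) ^ x)%N.
rewrite -(@leq_pmul2r (j.+1 * x.+1)) //.
have -> : ('C(i, j.+1) * 'C(n - i, x) * ('C(k, j) * i ^ j * (n - i) ^ x.+1)
           * (j.+1 * x.+1) = (i - j) * (n - i) * c)%N.
  transitivity (j.+1 * 'C(i, j.+1) * ('C(n - i, x) * 'C(k, j) * i ^ j
                * (n - i) ^ x.+1 * x.+1))%N; first by ring.
  by rewrite Ci /c expnS; ring.
have -> : ('C(i, j) * 'C(n - i, x.+1) * ('C(k, j.+1) * i ^ j.+1 * (n - i) ^ x)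
           * (j.+1 * x.+1) = (n - i - x) * i * c)%N.
  transitivity (x.+1 * 'C(n - i, x.+1) * (j.+1 * 'C(k, j.+1))
                * ('C(i, j) * i ^ j.+1 * (n - i) ^ x))%N; first by ring.
  by rewrite Cn Ck /c expnS; ring.
by apply: leq_mul => //; nia.
Qed.

Lemma lr_le_from_steps (R : numDomainType) (f g : nat -> R) (a d : nat) :
  (forall j, 0 <= g j) ->
  (forall j, (a <= j < d)%N -> 0 < g j) ->
  (forall j, (a <= j < d)%N -> f j.+1 * g j <= f j * g j.+1) ->
  (a <= d)%N -> f d * g a <= f a * g d.
Proof.
move=> g_ge0 + + le_ad; rewrite -(subnKC le_ad).
elim: (d - a)%N => [|e IH] g_gt0 step; first by rewrite addn0.
have inE j : (a <= j < a + e)%N -> (a <= j < a + e.+1)%N by lia.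
have IHe := IH (fun j hj => g_gt0 j (inE j hj)) (fun j hj => step j (inE j hj)).
have ae : (a <= a + e < a + e.+1)%N by lia.
rewrite addnS -(ler_pM2r (g_gt0 _ ae)).
apply: (le_trans (y := f (a + e) * g (a + e).+1 * g a)).
  by rewrite mulrAC ler_wpM2r // step.
by rewrite mulrAC [f a * _ * _]mulrAC ler_wpM2r.
Qed.

Lemma lr_weighted_sum_le (R : numDomainType) (K : nat) (S : pred nat)
    (w f g : nat -> R) :
  (forall a d : nat, (a < K)%N -> (d < K)%N -> S a -> S d -> (a <= d)%N ->
     f d * g a <= f a * g d) ->
  {homo w : a d / (a <= d)%N >-> a <= d} ->
  (\sum_(j < K | S j) w j * f j) * (\sum_(j < K | S j) g j) <=
  (\sum_(j < K | S j) w j * g j) * (\sum_(j < K | S j) f j).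
Proof.
move=> lr w_mono.
pose F (d a : 'I_K) := w d * (g d * f a - f d * g a).
have diffE : (\sum_(j < K | S j) w j * g j) * (\sum_(j < K | S j) f j)
    - (\sum_(j < K | S j) w j * f j) * (\sum_(j < K | S j) g j)
    = \sum_(d < K | S d) \sum_(a < K | S a) F d a.
  rewrite !mulr_suml -sumrB; apply: eq_bigr => d _.
  by rewrite !mulr_sumr -sumrB; apply: eq_bigr => a _; rewrite /F; ring.
(* Symmetrizing in (a, d) turns the sum into one of products of equal signs. *)
have symE : (\sum_(d < K | S d) \sum_(a < K | S a) F d a) *+ 2
    = \sum_(d < K | S d) \sum_(a < K | S a) (w d - w a) * (g d * f a - f d * g a).
  rewrite mulr2n [X in X + _ = _]exchange_big -big_split /=; apply: eq_bigr => d _.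
  by rewrite -big_split /=; apply: eq_bigr => a _; rewrite /F; ring.
rewrite -subr_ge0 diffE -(pmulrn_lge0 _ (ltn0Sn 1)) symE.
apply: sumr_ge0 => d Sd; apply: sumr_ge0 => a Sa.
have [le_ad | lt_da] := leqP a d.
  apply: mulr_ge0; rewrite subr_ge0 ?w_mono // [g d * _]mulrC; exact: lr.
apply: mulr_le0; rewrite subr_le0 ?w_mono ?(ltnW lt_da) // [g d * _]mulrC.
by apply: lr => //; exact: ltnW.
Qed.

Lemma lr_cond_mean_le (R : numFieldType) (K : nat) (S : pred nat)
    (w f g : nat -> R) :
  (forall a d : nat, (a < K)%N -> (d < K)%N -> S a -> S d -> (a <= d)%N ->
     f d * g a <= f a * g d) ->
  {homo w : a d / (a <= d)%N >-> a <= d} ->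
  0 < \sum_(j < K | S j) f j -> 0 < \sum_(j < K | S j) g j ->
  (\sum_(j < K | S j) w j * f j) / (\sum_(j < K | S j) f j) <=
  (\sum_(j < K | S j) w j * g j) / (\sum_(j < K | S j) g j).
Proof.
move=> lr w_mono f_gt0 g_gt0.
rewrite ler_pdivrMr // mulrAC ler_pdivlMr //.
exact: lr_weighted_sum_le.
Qed.

Lemma tail_gt0 (R : realFieldType) (k : nat) (f : nat -> R) (t : R) (j : nat) :
  (forall j, 0 <= f j) -> (j <= k)%N -> t <= j%:R -> 0 < f j -> 0 < tail k f t.
Proof.
move=> f_ge0 le_jk le_tj f_gt0; rewrite /tail (bigD1 (Ordinal (le_jk : j < k.+1)%N)) //=.
by rewrite ltr_pwDl // sumr_ge0.
Qed.

Lemma cond_tailE (R : realFieldType) (k : nat) (f : nat -> R) (m t : R) :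
  cond_tail k f m t =
  (\sum_(j < k.+1 | m <= j%:R) (t <= j%:R)%R%:R * f j) / tail k f m.
Proof.
rewrite /cond_tail big_mkcondl /=; congr (_ / _).
by apply: eq_bigr => j _; rewrite mulr_natl mulrb.
Qed.

Lemma ler_divn_nat (R : numFieldType) (a n j : nat) :
  (0 < n)%N -> (a%:R / n%:R <= j%:R :> R) = (a <= j * n)%N.
Proof. by move=> n_gt0; rewrite ler_pdivrMr ?ltr0n // -natrM ler_nat. Qed.

Section HypergeometricVersusBinomial.

Variables (R : realFieldType) (n i k : nat).
Hypotheses (i_gt0 : (0 < i)%N) (le_in : (i <= n)%N).

Let n_gt0 : (0 < n)%N. Proof. exact: leq_trans i_gt0 le_in. Qed.

Local Notation hyp := (hyp_pmf R n i k).
Local Notation bin := (bin_pmf k (i%:R / n%:R : R)).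

Lemma hyp_pmfE j : hyp j = (hyp_weight n i k j)%:R / ('C(n, k))%:R.
Proof. by []. Qed.

Lemma bin_pmfE j : bin j = (bin_weight n i k j)%:R / (n ^ k)%:R.
Proof.
rewrite /bin_pmf /bin_weight.
have [lt_kj | le_jk] := ltnP k j; first by rewrite bin_small // !mul0n !mul0r.
have n0 : n%:R != 0 :> R by rewrite pnatr_eq0 -lt0n.
have -> : 1 - i%:R / n%:R = (n - i)%:R / n%:R :> R.
  by rewrite natrB // mulrBl divff.
have -> : (n ^ k)%:R = n%:R ^+ j * n%:R ^+ (k - j) :> R.
  by rewrite -exprD subnKC // natrX.
rewrite !expr_div_n !natrM !natrX; field.
by rewrite !expf_neq0.
Qed.

Lemma bin_pmf_ge0 j : 0 <= bin j.
Proof. by rewrite bin_pmfE divr_ge0. Qed.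

Lemma bin_pmf_gt0 j : (j <= k)%N -> (i * k <= j * n)%N -> 0 < bin j.
Proof.
move=> le_jk le_ik_jn; rewrite bin_pmfE divr_gt0 // ltr0n ?expn_gt0 ?n_gt0 //.
rewrite /bin_weight !muln_gt0 bin_gt0 le_jk !expn_gt0 i_gt0 /=.
have [lt_in | le_ni] := ltnP i n; first by rewrite subn_gt0 lt_in.
have i_eq_n : i = n by apply/eqP; rewrite eqn_leq le_in.
rewrite i_eq_n in le_ik_jn *; rewrite subnn subn_eq0 /=; nia.
Qed.

Lemma hyp_bin_lr_step j :
  (j < k)%N -> (i * k <= j * n)%N -> hyp j.+1 * bin j <= hyp j * bin j.+1.
Proof.
move=> lt_jk le_ik_jn; rewrite !hyp_pmfE !bin_pmfE !mulf_div -!natrM.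
by rewrite ler_wpM2r ?invr_ge0 // ler_nat hyp_bin_weight_step.
Qed.

Lemma hyp_bin_lr a d :
  (a <= d <= k)%N -> (i * k <= a * n)%N -> hyp d * bin a <= hyp a * bin d.
Proof.
move=> /andP[le_ad le_dk] le_ik_an.
have upper j : (a <= j)%N -> (i * k <= j * n)%N.
  by move=> le_aj; apply: leq_trans le_ik_an _; rewrite leq_mul2r le_aj orbT.
apply: lr_le_from_steps => // [j | j /andP[le_aj lt_jd] | j /andP[le_aj lt_jd]].
- exact: bin_pmf_ge0.
- by rewrite bin_pmf_gt0 ?upper // ltnW // (leq_trans lt_jd).
- by rewrite hyp_bin_lr_step ?upper // (leq_trans lt_jd).
Qed.

Lemma hyp_tail_gt0 : (k <= n)%N -> 0 < tail k hyp ((i * k)%:R / n%:R).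
Proof.
move=> le_kn; apply: (@tail_gt0 _ _ _ _ (minn i k)) => [j||| ].
- by rewrite hyp_pmfE divr_ge0.
- exact: geq_minr.
- by rewrite ler_divn_nat //; nia.
rewrite hyp_pmfE divr_gt0 // ltr0n ?bin_gt0 //.
by rewrite /hyp_weight muln_gt0 !bin_gt0; lia.
Qed.

Lemma bin_tail_gt0 : 0 < tail k bin ((i * k)%:R / n%:R).
Proof.
apply: (@tail_gt0 _ _ _ _ k) => [j|||]; rewrite ?ler_divn_nat //.
- exact: bin_pmf_ge0.
- by rewrite mulnC leq_mul2l le_in orbT.
by rewrite bin_pmf_gt0 // mulnC leq_mul2l le_in orbT.
Qed.

End HypergeometricVersusBinomial.

Theorem lemma6 (R : realFieldType) (n k i : nat) :
  (1 <= k)%N -> (k <= n)%N -> (1 <= i)%N -> (i <= n)%N ->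
  let m : R := (i * k)%:R / n%:R in
  let p : R := i%:R / n%:R in
  cond_st_le k (hyp_pmf R n i k) (bin_pmf k p) m /\
  cond_exp k (hyp_pmf R n i k) m <= cond_exp k (bin_pmf k p) m.
Proof.
move=> _ le_kn i_gt0 le_in m p.
have n_gt0 : (0 < n)%N by apply: leq_trans i_gt0 le_in.
have lr a d : (a < k.+1)%N -> (d < k.+1)%N -> m <= a%:R -> m <= d%:R ->
    (a <= d)%N -> hyp_pmf R n i k d * bin_pmf k p a <= hyp_pmf R n i k a * bin_pmf k p d.
  rewrite /m !ler_divn_nat // => _ le_dk le_ik_an _ le_ad.
  by apply: hyp_bin_lr; rewrite ?le_ad.
have hyp_tail : 0 < tail k (hyp_pmf R n i k) m by exact: hyp_tail_gt0.
have bin_tail : 0 < tail k (bin_pmf k p) m by exact: bin_tail_gt0.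
split.
  move=> t; rewrite !cond_tailE.
  apply: (@lr_cond_mean_le _ _ (fun j => m <= j%:R) (fun j => (t <= j%:R)%R%:R))
    => // a d le_ad.
  have [le_ta | _] := boolP (t <= a%:R); last exact: ler0n.
  by rewrite (le_trans le_ta) // ler_nat.
apply: (@lr_cond_mean_le _ _ (fun j => m <= j%:R) (fun j => j%:R)) => // a d.
by rewrite ler_nat.
Qed.
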